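(* (Normal form partial resolution subformula property.) For any $\mathsf{GT}^-$-derivation $\mathcal{D}$ of a sequent $\Gamma\Rightarrow\Delta$ that is in normal form, each formula occurring in $\mathcal{D}$ is a partial resolution of some formula occurring in $\Gamma,\Delta$ or a subformula of a resolution of some formula occurring in $\Gamma,\Delta$.
   Context: Fix a countably infinite set $\mathsf{Prop}$ of propositional variables. Classical formulas are generated by $\alpha ::= p \mid \bot \mid \neg\alpha \mid \alpha\wedge\alpha \mid \alpha\vee\alpha$ with $p\in\mathsf{Prop}$. Formulas are generated by $\phi ::= \alpha \mid \phi\wedge\phi \mid \phi\vee\phi \mid \phi\mathbin{\backslash\!\!/}\phi$ where $\alpha$ is classical ($\vee$: split disjunction, $\mathbin{\backslash\!\!/}$: inquisitive disjunction). A sequent is $\Gamma\Rightarrow\Delta$ with $\Gamma,\Delta$ finite multisets of formulas; ''$\Gamma,\Delta$'' is multiset union. Resolutions: $\mathcal{R}(p)=\{p\}$, $\mathcal{R}(\bot)=\{\bot\}$, $\mathcal{R}(\neg\alpha)=\{\neg\beta:\beta\in\mathcal{R}(\alpha)\}$, $\mathcal{R}(\phi\wedge\psi)=\{\alpha\wedge\beta:\alpha\in\mathcal{R}(\phi),\beta\in\mathcal{R}(\psi)\}$, $\mathcal{R}(\phi\vee\psi)=\{\alpha\vee\beta:\alpha\in\mathcal{R}(\phi),\beta\in\mathcal{R}(\psi)\}$, $\mathcal{R}(\phi\mathbin{\backslash\!\!/}\psi)=\mathcal{R}(\phi)\cup\mathcal{R}(\psi)$. For a multiset $\Gamma$, $\mathcal{R}(\Gamma)$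 is the set of multisets $g[\Gamma]$ where $g$ assigns to each element (occurrence) $\phi$ of $\Gamma$ some $g(\phi)\in\mathcal{R}(\phi)$. Partial resolutions: a partial resolution of a formula $\phi$ is any formula obtained from $\phi$ by a finite (possibly empty) sequence of steps, each of which replaces one occurrence of a subformula of the form $\psi_L\mathbin{\backslash\!\!/}\psi_R$ in the current formula by $\psi_L$ or by $\psi_R$. Deep-inference notation: for a formula $\chi$ with a designated occurrence of a subformula not in the scope of any negation, $\chi\{\eta\}$ denotes the result of replacing that occurrence by $\eta$. The cut-free calculus $\mathsf{GT}^-$ ($\alpha$ ranges over classical formulas, $\Lambda$ over multisets of classical formulas): axioms $\Gamma,p\Rightarrow p,\Delta$ and $\Gamma,\bot\Rightarrow\Delta$; (L$\neg$) from $\Gamma\Rightarrow\alpha,\Delta$ infer $\Gamma,\neg\alpha\Rightarrow\Delta$; (R$\neg$) from $\Gamma,\alpha\Rightarrow\Delta$ infer $\Gamma\Rightarrow\neg\alpha,\Delta$; (L$\wedge$) from $\Gamma,\phi,\psi\Rightarrow\Delta$ infer $\Gamma,\phi\wedge\psi\Rightarrow\Delta$; (R$\wedge$) from $\Gamma\Rightarrow\phi,\Lambda$ and $\Gamma\Rightarrow\psi,\Lambda$ infer $\Gamma\Rightarrow\phi\wedge\psi,\Lambda,\Delta$; (L$\vee$) from $\Gamma,\phi\Rightarrow\Lambda$ and $\Gamma,\psi\Rightarrow\Lambda$ infer $\Gamma,\phi\vee\psi\Rightarrow\Lambda,\Delta$; (R$\vee$) from $\Gamma\Rightarrow\phi,\psi,\Delta$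 infer $\Gamma\Rightarrow\phi\vee\psi,\Delta$; (L$\mathbin{\backslash\!\!/}$) from $\Gamma,\chi\{\phi_L\}\Rightarrow\Delta$ and $\Gamma,\chi\{\phi_R\}\Rightarrow\Delta$ infer $\Gamma,\chi\{\phi_L\mathbin{\backslash\!\!/}\phi_R\}\Rightarrow\Delta$; (R$\mathbin{\backslash\!\!/}$) from $\Gamma\Rightarrow\chi\{\phi_i\},\Delta$ ($i\in\{L,R\}$) infer $\Gamma\Rightarrow\chi\{\phi_L\mathbin{\backslash\!\!/}\phi_R\},\Delta$. $\mathsf{G3cp}^-$ is $\mathsf{GT}^-$ without (L$\mathbin{\backslash\!\!/}$) and (R$\mathbin{\backslash\!\!/}$). Normal form: a $\mathsf{GT}^-$-derivation of $\Gamma\Rightarrow\Delta$ is in normal form if, for some $f:\mathcal{R}(\Gamma)\to\mathcal{R}(\Delta)$, it consists of $\mathsf{G3cp}^-$-derivations of $\Xi\Rightarrow f(\Xi)$ for each $\Xi\in\mathcal{R}(\Gamma)$, extended using only (R$\mathbin{\backslash\!\!/}$) to derivations of $\Xi\Rightarrow\Delta$ for each $\Xi\in\mathcal{R}(\Gamma)$, which are then combined using only (L$\mathbin{\backslash\!\!/}$) into a derivation of $\Gamma\Rightarrow\Delta$. *)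

From Stdlib Require Import List Permutation Relations.
Import ListNotations.

Inductive form : Type :=
| Var : nat -> form
| Bot : form
| Neg : form -> form
| And : form -> form -> form
| Or  : form -> form -> form    (* split disjunction *)
| Ior : form -> form -> form.   (* inquisitive disjunction *)

Fixpoint classical (a : form) : Prop :=
  match a with
  | Var _ | Bot => True
  | Neg a => classical a
  | And a b | Or a b => classical a /\ classical b
  | Ior _ _ => False
  end.

Fixpoint wf (f : form) : Prop :=
  match f with
  | Var _ | Bot => True
  | Neg a => classical a
  | And a b | Or a b | Ior a b => wf a /\ wf b
  end.

Inductive is_res : form -> form -> Prop :=
| res_var p : is_res (Var p) (Var p)
| res_bot : is_res Bot Bot
| res_neg a b : is_res a b -> is_res (Neg a) (Neg b)
| res_and a b a' b' : is_res a a' -> is_res b b' -> is_res (And a b) (And a' b')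
| res_or a b a' b' : is_res a a' -> is_res b b' -> is_res (Or a b) (Or a' b')
| res_iorL a b c : is_res a c -> is_res (Ior a b) c
| res_iorR a b c : is_res b c -> is_res (Ior a b) c.

(* Multisets are lists up to permutation. Xi \in R(Gamma): *)
Definition inR (G X : list form) : Prop :=
  exists X', Forall2 is_res G X' /\ Permutation X' X.

Inductive pr_step : form -> form -> Prop :=
| prs_L a b : pr_step (Ior a b) a
| prs_R a b : pr_step (Ior a b) b
| prs_neg a a' : pr_step a a' -> pr_step (Neg a) (Neg a')
| prs_andl a a' b : pr_step a a' -> pr_step (And a b) (And a' b)
| prs_andr a b b' : pr_step b b' -> pr_step (And a b) (And a b')
| prs_orl a a' b : pr_step a a' -> pr_step (Or a b) (Or a' b)
| prs_orr a b b' : pr_step b b' -> pr_step (Or a b) (Or a b')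
| prs_iorl a a' b : pr_step a a' -> pr_step (Ior a b) (Ior a' b)
| prs_iorr a b b' : pr_step b b' -> pr_step (Ior a b) (Ior a b').

Definition partial_res : form -> form -> Prop := clos_refl_trans form pr_step.

Inductive subformula (psi : form) : form -> Prop :=
| sub_refl : subformula psi psi
| sub_neg a : subformula psi a -> subformula psi (Neg a)
| sub_andl a b : subformula psi a -> subformula psi (And a b)
| sub_andr a b : subformula psi b -> subformula psi (And a b)
| sub_orl a b : subformula psi a -> subformula psi (Or a b)
| sub_orr a b : subformula psi b -> subformula psi (Or a b)
| sub_iorl a b : subformula psi a -> subformula psi (Ior a b)
| sub_iorr a b : subformula psi b -> subformula psi (Ior a b).

(* Deep-inference contexts chi{ } : a hole not in the scope of a negation *)
Inductive ctx : Type :=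
| Hole : ctx
| CAndL : ctx -> form -> ctx
| CAndR : form -> ctx -> ctx
| COrL : ctx -> form -> ctx
| COrR : form -> ctx -> ctx
| CIorL : ctx -> form -> ctx
| CIorR : form -> ctx -> ctx.

Fixpoint plug (c : ctx) (e : form) : form :=
  match c with
  | Hole => e
  | CAndL c b => And (plug c e) b
  | CAndR a c => And a (plug c e)
  | COrL c b => Or (plug c e) b
  | COrR a c => Or a (plug c e)
  | CIorL c b => Ior (plug c e) b
  | CIorR a c => Ior a (plug c e)
  end.

(* sequents: (antecedent, succedent), each a multiset given as a list *)
Definition sequent : Type := (list form * list form)%type.

Definition seq_perm (s t : sequent) : Prop :=
  Permutation (fst s) (fst t) /\ Permutation (snd s) (snd t).

Inductive rule : Type :=
| AxP | AxBot | LNeg | RNeg | LAnd | RAnd | LOr | ROr | LIor | RIor.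

(* rule instances with a fixed list representation of the multisets *)
Inductive step_exact : rule -> list sequent -> sequent -> Prop :=
| se_axp G D p : step_exact AxP [] (Var p :: G, Var p :: D)
| se_axbot G D : step_exact AxBot [] (Bot :: G, D)
| se_lneg G D a : classical a ->
    step_exact LNeg [(G, a :: D)] (Neg a :: G, D)
| se_rneg G D a : classical a ->
    step_exact RNeg [(a :: G, D)] (G, Neg a :: D)
| se_land G D f g :
    step_exact LAnd [(f :: g :: G, D)] (And f g :: G, D)
| se_rand G L D f g : Forall classical L ->
    step_exact RAnd [(G, f :: L); (G, g :: L)] (G, And f g :: L ++ D)
| se_lor G L D f g : Forall classical L ->
    step_exact LOr [(f :: G, L); (g :: G, L)] (Or f g :: G, L ++ D)
| se_ror G D f g :
    step_exact ROr [(G, f :: g :: D)] (G, Or f g :: D)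
| se_lior G D c fL fR :
    step_exact LIor [(plug c fL :: G, D); (plug c fR :: G, D)]
                    (plug c (Ior fL fR) :: G, D)
| se_riorL G D c fL fR :
    step_exact RIor [(G, plug c fL :: D)] (G, plug c (Ior fL fR) :: D)
| se_riorR G D c fL fR :
    step_exact RIor [(G, plug c fR :: D)] (G, plug c (Ior fL fR) :: D).

Definition step (r : rule) (prems : list sequent) (concl : sequent) : Prop :=
  exists prems' concl',
    Forall2 seq_perm prems prems' /\ seq_perm concl concl' /\
    step_exact r prems' concl'.

Inductive deriv : Type :=
| dnode : rule -> sequent -> list deriv -> deriv.

Definition dconcl (d : deriv) : sequent := match d with dnode _ s _ => s end.
Definition drule (d : deriv) : rule := match d with dnode r _ _ => r end.

Inductive valid (allowed : rule -> Prop) : deriv -> Prop :=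
| vnode r s ds : allowed r -> step r (map dconcl ds) s ->
    Forall (valid allowed) ds -> valid allowed (dnode r s ds).

Definition GT_rules (r : rule) : Prop := True.
Definition G3cp_rules (r : rule) : Prop := r <> LIor /\ r <> RIor.

Definition GT_derivation (d : deriv) (G D : list form) : Prop :=
  valid GT_rules d /\ dconcl d = (G, D).

Inductive rstage (Xi Th : list form) : deriv -> Prop :=
| rs_base d : valid G3cp_rules d -> seq_perm (dconcl d) (Xi, Th) ->
    rstage Xi Th d
| rs_step s d : step RIor [dconcl d] s -> rstage Xi Th d ->
    rstage Xi Th (dnode RIor s [d]).

Inductive lstage (P : deriv -> Prop) : deriv -> Prop :=
| ls_base d : P d -> lstage P d
| ls_step s d1 d2 : step LIor [dconcl d1; dconcl d2] s ->
    lstage P d1 -> lstage P d2 -> lstage P (dnode LIor s [d1; d2]).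

(* lleaf d' d : d' is one of the subderivations combined by the (L\\/)
   part at the bottom of d *)
Inductive lleaf : deriv -> deriv -> Prop :=
| ll_base r s ds : r <> LIor -> lleaf (dnode r s ds) (dnode r s ds)
| ll_sub s ds d d' : In d ds -> lleaf d' d -> lleaf d' (dnode LIor s ds).

Definition normal_form (d : deriv) (G D : list form) : Prop :=
  exists f : list form -> list form,
    (* f is a function on multisets, R(G) -> R(D) *)
    (forall X Y, Permutation X Y -> Permutation (f X) (f Y)) /\
    (forall X, inR G X -> inR D (f X)) /\
    (* the derivation is combined by (L\\/) from derivations of Xi => D,
       Xi in R(G), each being a G3cp^- derivation of Xi => f(Xi)
       extended using only (R\\/) *)
    lstage (fun d' => exists X, inR G X /\ seq_perm (dconcl d') (X, D) /\
                                rstage X (f X) d') d /\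
    (* there is such a component for each Xi in R(G) *)
    (forall X, inR G X ->
       exists d', lleaf d' d /\ Permutation (fst (dconcl d')) X).

Inductive occurs (phi : form) : deriv -> Prop :=
| occ_here r s ds : In phi (fst s ++ snd s) -> occurs phi (dnode r s ds)
| occ_sub r s ds d : In d ds -> occurs phi d -> occurs phi (dnode r s ds).

From Stdlib Require Import List Permutation Relations.
Import ListNotations.

(** Read the derivation from the root upwards.  Every rule of G3cp^- has the
    subformula property, so inside the G3cp^- derivations of [Xi => f Xi]
    every formula is a subformula of a formula of [Xi, f Xi], i.e. of a
    resolution of a formula of [Gamma, Delta].  Below them, (L\\/) and (R\\/)
    only replace an inquisitive disjunction inside a formula of the
    conclusion by one of its disjuncts, so these formulas are partial
    resolutions of formulas of [Gamma, Delta]; the alternative "subformula of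
    a resolution" is stable too, since such formulas are classical and admit
    no such replacement. *)

Lemma subformula_trans a b c : subformula a b -> subformula b c -> subformula a c.
Proof. intros Hab Hbc; induction Hbc; eauto using subformula. Qed.

Lemma is_res_classical phi alpha : is_res phi alpha -> classical alpha.
Proof. induction 1; simpl; auto. Qed.

Lemma subformula_classical a b : subformula a b -> classical b -> classical a.
Proof. induction 1; simpl; tauto. Qed.

Lemma pr_step_not_classical a b : pr_step a b -> ~ classical a.
Proof. induction 1; simpl; tauto. Qed.

Lemma pr_step_plug_l c a b : pr_step (plug c (Ior a b)) (plug c a).
Proof. induction c; simpl; constructor; auto. Qed.

Lemma pr_step_plug_r c a b : pr_step (plug c (Ior a b)) (plug c b).
Proof. induction c; simpl; constructor; auto. Qed.

Definition seq_forall (Q : form -> Prop) (s : sequent) : Prop :=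
  Forall Q (fst s ++ snd s).

Definition premises_inherit (Q : form -> Prop) (r : rule) : Prop :=
  forall ps s, step_exact r ps s -> seq_forall Q s -> Forall (seq_forall Q) ps.

Lemma seq_forall_iff Q s : seq_forall Q s <-> forall phi, In phi (fst s ++ snd s) -> Q phi.
Proof. apply Forall_forall. Qed.

Ltac locate_in_rule_instance p phi :=
  simpl in *;
  repeat match goal with H : _ \/ _ |- _ => destruct H | H : _ = p |- _ => subst p end;
  try contradiction; simpl in *; rewrite ?in_app_iff in *; simpl in *;
  repeat match goal with H : _ \/ _ |- _ => destruct H | H : _ = phi |- _ => subst phi end.

Lemma G3cp_premises_inherit (Q : form -> Prop) r :
  (forall a b, subformula a b -> Q b -> Q a) -> G3cp_rules r -> premises_inherit Q r.
Proof.
  intros HQ [Hl Hr] ps s He Hs; rewrite seq_forall_iff in Hs.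
  apply Forall_forall; intros p Hp; apply seq_forall_iff; intros phi Hphi.
  destruct He; try congruence; locate_in_rule_instance p phi;
    eauto 10 using subformula, in_or_app, in_eq, in_cons.
Qed.

Lemma Ior_premises_inherit (Q : form -> Prop) r :
  (forall a b, pr_step a b -> Q a -> Q b) -> r = LIor \/ r = RIor ->
  premises_inherit Q r.
Proof.
  intros HQ Hr ps s He Hs; rewrite seq_forall_iff in Hs.
  apply Forall_forall; intros p Hp; apply seq_forall_iff; intros phi Hphi.
  destruct He; try (destruct Hr; discriminate); locate_in_rule_instance p phi;
    eauto using pr_step_plug_l, pr_step_plug_r, in_or_app, in_eq, in_cons.
Qed.

Lemma seq_forall_perm Q s t : seq_perm s t -> seq_forall Q s <-> seq_forall Q t.
Proof.
  intros [Hl Hr]; split; apply Permutation_Forall;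
    [| apply Permutation_sym]; apply Permutation_app; assumption.
Qed.

Lemma step_premises_inherit Q r ps s :
  premises_inherit Q r -> step r ps s -> seq_forall Q s -> Forall (seq_forall Q) ps.
Proof.
  intros Hr (ps' & s' & Hps & Hs & He) HQ.
  assert (HQps' : Forall (seq_forall Q) ps')
    by exact (Hr _ _ He (proj1 (seq_forall_perm Q _ _ Hs) HQ)).
  clear - Hps HQps'; induction Hps as [|p p' ps ps' Hp _ IH]; constructor;
    inversion HQps'; subst; auto.
  now apply (seq_forall_perm Q _ _ Hp).
Qed.

(* The generated [deriv_ind] has no induction hypothesis for the
   subderivations, which are nested inside a list. *)
Fixpoint deriv_ind_nested (P : deriv -> Prop)
  (H : forall r s ds, Forall P ds -> P (dnode r s ds)) (d : deriv) : P d :=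
  match d with
  | dnode r s ds => H r s ds
      ((fix go (l : list deriv) : Forall P l :=
          match l with
          | [] => Forall_nil _
          | x :: l' => Forall_cons _ (deriv_ind_nested P H x) (go l')
          end) ds)
  end.

Lemma occurs_valid (Q : form -> Prop) allowed d :
  (forall r, allowed r -> premises_inherit Q r) ->
  valid allowed d -> seq_forall Q (dconcl d) -> forall phi, occurs phi d -> Q phi.
Proof.
  intros Hallowed; induction d as [r s ds IH] using deriv_ind_nested.
  intros Hv HQ phi Hocc; inversion Hv as [? ? ? Hr Hstep Hds]; subst.
  assert (HQds : Forall (seq_forall Q) (map dconcl ds))
    by exact (step_premises_inherit _ _ _ _ (Hallowed r Hr) Hstep HQ).
  rewrite Forall_map, Forall_forall in HQds; rewrite Forall_forall in IH, Hds.
  inversion Hocc; subst; eauto.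
  now apply (proj1 (seq_forall_iff Q s)).
Qed.

Lemma occurs_rstage (Q : form -> Prop) X Th d :
  rstage X Th d ->
  (forall d', valid G3cp_rules d' -> seq_perm (dconcl d') (X, Th) ->
     forall phi, occurs phi d' -> Q phi) ->
  premises_inherit Q RIor ->
  seq_forall Q (dconcl d) -> forall phi, occurs phi d -> Q phi.
Proof.
  intros Hd Hbase HR; induction Hd as [d Hv Hp | s d Hstep _ IH]; eauto.
  intros HQ phi Hocc.
  assert (HQd : Forall (seq_forall Q) [dconcl d])
    by exact (step_premises_inherit _ _ _ _ HR Hstep HQ).
  inversion HQd; inversion Hocc as [? ? ? Hin | ? ? ? d' Hin Hocc']; subst.
  - now apply (proj1 (seq_forall_iff Q s)).
  - destruct Hin as [<- | []]; auto.
Qed.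

Lemma occurs_lstage (Q : form -> Prop) (P : deriv -> Prop) d :
  lstage P d ->
  (forall d', P d' -> seq_forall Q (dconcl d') -> forall phi, occurs phi d' -> Q phi) ->
  premises_inherit Q LIor ->
  seq_forall Q (dconcl d) -> forall phi, occurs phi d -> Q phi.
Proof.
  intros Hd Hbase HL; induction Hd as [d Hd | s d1 d2 Hstep _ IH1 _ IH2]; eauto.
  intros HQ phi Hocc.
  assert (HQd : Forall (seq_forall Q) [dconcl d1; dconcl d2])
    by exact (step_premises_inherit _ _ _ _ HL Hstep HQ).
  inversion HQd as [| ? ? ? HQd2]; inversion HQd2;
    inversion Hocc as [? ? ? Hin | ? ? ? d' Hin Hocc']; subst.
  - now apply (proj1 (seq_forall_iff Q s)).
  - destruct Hin as [<- | [<- | []]]; auto.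
Qed.

Section Resolutions.
Variable S : list form.

Definition sub_res_of (phi : form) : Prop :=
  exists psi, In psi S /\ exists alpha, is_res psi alpha /\ subformula phi alpha.

Definition pres_or_sub_res_of (phi : form) : Prop :=
  exists psi, In psi S /\
    (partial_res psi phi \/ exists alpha, is_res psi alpha /\ subformula phi alpha).

Lemma sub_res_of_subformula a b : subformula a b -> sub_res_of b -> sub_res_of a.
Proof.
  intros Hab (psi & Hpsi & alpha & Hres & Hb).
  exists psi; split; [exact Hpsi|]; exists alpha; eauto using subformula_trans.
Qed.

Lemma sub_res_of_pres phi : sub_res_of phi -> pres_or_sub_res_of phi.
Proof. intros (psi & Hpsi & Hres); exists psi; auto. Qed.

Lemma pres_or_sub_res_of_pr_step a b :
  pr_step a b -> pres_or_sub_res_of a -> pres_or_sub_res_of b.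
Proof.
  intros Hab (psi & Hpsi & [Hpr | (alpha & Hres & Ha)]).
  - exists psi; split; [exact Hpsi|]; left; eapply rt_trans; [exact Hpr | now apply rt_step].
  - exfalso; apply (pr_step_not_classical _ _ Hab).
    eapply subformula_classical; eauto using is_res_classical.
Qed.

Lemma inR_sub_res_of G X : incl G S -> inR G X -> Forall sub_res_of X.
Proof.
  intros HG (X' & HGX' & HX'); eapply Permutation_Forall; [exact HX' |]; clear HX'.
  induction HGX' as [| psi alpha G X' Hres _ IH]; constructor.
  - exists psi; split; [apply HG, in_eq|]; exists alpha; split; [exact Hres | constructor].
  - apply IH; intros phi Hphi; apply HG, in_cons, Hphi.
Qed.

End Resolutions.

Theorem proposition7p3 (G D : list form) (d : deriv) :
  Forall wf G -> Forall wf D ->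
  GT_derivation d G D ->
  normal_form d G D ->
  forall phi, occurs phi d ->
    exists psi, In psi (G ++ D) /\
      (partial_res psi phi \/ exists alpha, is_res psi alpha /\ subformula phi alpha).
Proof.
  intros _ _ [_ Hconcl] (f & _ & Hf & Hlstage & _).
  set (S := G ++ D).
  assert (HIor : forall r, r = LIor \/ r = RIor -> premises_inherit (pres_or_sub_res_of S) r)
    by (intros r; apply Ior_premises_inherit, pres_or_sub_res_of_pr_step).
  apply (occurs_lstage _ _ d Hlstage); [| now apply HIor; left |].
  - intros d' (X & HX & _ & Hrstage) Hd'.
    apply (occurs_rstage _ _ _ _ Hrstage); [| now apply HIor; right | exact Hd'].
    intros d'' Hvalid Hperm phi Hphi; apply sub_res_of_pres.
    apply (occurs_valid (sub_res_of S) G3cp_rules d''); [| exact Hvalid | | exact Hphi].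
    + intros r; apply G3cp_premises_inherit, sub_res_of_subformula.
    + apply (seq_forall_perm _ _ _ Hperm), Forall_app; split.
      * apply (inR_sub_res_of S G); [apply incl_appl, incl_refl | exact HX].
      * apply (inR_sub_res_of S D); [apply incl_appr, incl_refl | exact (Hf X HX)].
  - rewrite Hconcl; apply Forall_forall; intros psi Hpsi.
    exists psi; split; [exact Hpsi | left; apply rt_refl].
Qed.
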